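(* Let $f:\mathbb{F}_2^n\to\mathbb{F}_2^n$ be a nonsingular linear transformation and let $M$ be its matrix with respect to the standard basis. Then $f$ is closed neighbor balanced if and only if every row of $M$ contains exactly $(n+1)/2$ entries equal to $1$.
   Context: $Q_n$ is the hypercube on $\mathbb{F}_2^n$ (adjacency iff differing in exactly one coordinate); the closed neighborhood of $\boldsymbol{u}$ is $N[\boldsymbol{u}]=\{\boldsymbol{u}\}\cup\{\boldsymbol{u}+\boldsymbol{e}_j: j=1,\dots,n\}$, where $\boldsymbol{e}_j$ are the standard basis vectors. A subset $A\subseteq\mathbb{F}_2^n$ is balanced if for every coordinate $i$, the number of $\boldsymbol{a}\in A$ with $a_i=1$ equals $|A|/2$. A bijection $f:\mathbb{F}_2^n\to\mathbb{F}_2^n$ is closed neighbor balanced if $f(N[\boldsymbol{u}])$ is balanced for every $\boldsymbol{u}\in\mathbb{F}_2^n$. *)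

From mathcomp Require Import all_boot all_algebra.
Set Implicit Arguments. Unset Strict Implicit. Unset Printing Implicit Defensive.
Import GRing.Theory.
Local Open Scope ring_scope.

Definition vec (n : nat) := 'cV['F_2]_n.

Definition e_ (n : nat) (j : 'I_n) : vec n := delta_mx j 0.

Definition closed_nbhd (n : nat) (u : vec n) : {set vec n} :=
  u |: [set u + e_ j | j : 'I_n].

(* A is balanced: for every coordinate i, exactly |A|/2 elements have a_i = 1
   (stated without division: 2 * #{a in A | a_i = 1} = |A|). *)
Definition balanced (n : nat) (A : {set vec n}) : Prop :=
  forall i : 'I_n, (2 * #|[set a in A | a i ord0 == 1%R]| = #|A|)%N.

Definition closed_neighbor_balanced (n : nat) (f : vec n -> vec n) : Prop :=
  bijective f /\ forall u : vec n, balanced (f @: closed_nbhd u).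

From mathcomp Require Import all_boot all_algebra zify.

Set Implicit Arguments.
Unset Strict Implicit.
Unset Printing Implicit Defensive.
Local Open Scope ring_scope.
Import GRing.Theory.

(** A nonsingular linear map sends N[u] injectively onto {Mu} ∪ {Mu + M e_j},
    so in coordinate i the number of ones is [(Mu)_i = 1] + #{j | (Mu)_i + M_ij = 1}.
    If (Mu)_i = 0 this is the weight k of row i; if (Mu)_i = 1 it is 1 + (n - k).
    Both equal (n + 1)/2 exactly when 2k = n + 1, whatever u is. *)

Section Hypercube.
Variable n : nat.
Implicit Types (u : vec n) (j : 'I_n).

Lemma e_neq0 j : e_ j != 0.
Proof.
apply/eqP => /matrixP /(_ j 0) /eqP; rewrite !mxE !eqxx.
exact/negP/oner_neq0.
Qed.

Lemma e_inj : injective (@e_ n).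
Proof.
move=> j k /matrixP /(_ j 0); rewrite !mxE !eqxx /=.
by case: eqP => // _ /eqP; rewrite eq_sym oner_eq0.
Qed.

Lemma addr_e_neq u j : u + e_ j != u.
Proof. by rewrite -subr_eq0 addrC addKr e_neq0. Qed.

Lemma sum_closed_nbhd u (F : vec n -> nat) :
  (\sum_(x in closed_nbhd u) F x = F u + \sum_j F (u + e_ j)%R)%N.
Proof.
rewrite big_setU1 /=; last first.
  by apply/imsetP => -[j _ /eqP]; apply/negP; rewrite eq_sym addr_e_neq.
by rewrite big_imset //= => j k _ _ /addrI /e_inj.
Qed.

Lemma card_closed_nbhd u : #|closed_nbhd u| = n.+1.
Proof. by rewrite -sum1_card sum_closed_nbhd sum1_card card_ord add1n. Qed.

Lemma card_closed_nbhd_cond u (P : pred (vec n)) :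
  #|[set x in closed_nbhd u | P x]| = (P u + #|[set j | P (u + e_ j)%R]|)%N.
Proof.
rewrite -!sum1dep_card big_mkcondr sum_closed_nbhd [in RHS]big_mkcond.
by congr (_ + _); case: (P u).
Qed.

End Hypercube.

Lemma card_imset_cond (aT rT : finType) (f : aT -> rT) (A : {set aT}) (P : pred rT) :
  injective f -> #|[set y in f @: A | P y]| = #|[set x in A | P (f x)]|.
Proof. by move=> f_inj; rewrite -!sum1dep_card big_imset_cond // => x y _ _ /f_inj. Qed.

Lemma F2_eq0_or_1 (x : 'F_2) : x = 0 \/ x = 1.
Proof. by case: x => -[|[|]] // ?; [left | right]; apply/val_inj. Qed.

Lemma balanced_shift_F2 (I : finType) (r : I -> 'F_2) (c : 'F_2) :
  (2 * ((c == 1%R) + #|[set j | (c + r j == 1)%R]|) = #|I|.+1)%N <->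
  (2 * #|[set j | r j == 1%R]| = #|I|.+1)%N.
Proof.
case: (F2_eq0_or_1 c) => ->.
  by under eq_finset => j do rewrite add0r.
have -> : [set j | 1 + r j == 1] = ~: [set j | r j == 1].
  by apply/setP => j; rewrite !inE; case: (F2_eq0_or_1 (r j)) => ->.
have := cardsC [set j | r j == 1]; rewrite eqxx; lia.
Qed.

Lemma balanced_mulmx_closed_nbhd n (M : 'M['F_2]_n) (u : vec n) :
  M \in unitmx ->
  balanced ((fun x : vec n => M *m x) @: closed_nbhd u) <->
  forall i, (2 * #|[set j : 'I_n | M i j == 1%R]| = n.+1)%N.
Proof.
move=> M_unit.
have M_inj : injective (fun x : vec n => M *m x) := can_inj (mulKmx M_unit).
have ones_at i : #|[set a in (fun x => M *m x) @: closed_nbhd u | a i ord0 == 1]| =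
    (((M *m u) i ord0 == 1%R) + #|[set j | ((M *m u) i ord0 + M i j == 1)%R]|)%N.
  rewrite card_imset_cond // card_closed_nbhd_cond; congr (_ + _)%N.
  by apply: eq_card => j; rewrite !inE mulmxDr /e_ -colE !mxE.
rewrite /balanced card_imset // card_closed_nbhd.
split=> bal i; have := balanced_shift_F2 (M i) ((M *m u) i ord0);
  rewrite card_ord -ones_at => shift; exact/shift/bal.
Qed.

Theorem lemma3p6 (n : nat) (M : 'M['F_2]_n) :
  M \in unitmx ->
  (closed_neighbor_balanced (fun x : vec n => M *m x) <->
   forall i : 'I_n, (2 * #|[set j : 'I_n | M i j == 1%R]| = n + 1)%N).
Proof.
move=> M_unit; rewrite addn1; split=> [[_ /(_ 0)] | rows].
  by move/(balanced_mulmx_closed_nbhd 0 M_unit).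
split=> [| u]; last exact/(balanced_mulmx_closed_nbhd u M_unit).
by exists (mulmx (invmx M)); [exact: mulKmx | exact: mulKVmx].
Qed.
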